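(* Let $m\in\mathbb{N}\setminus\{1\}$, let $0<p<q\leq\infty$ and put $\alpha=1/p-1/q$. For each $i\in\{1,\dots,m\}$ let $X_{i},Y_{i}$ be quasi-Banach spaces and $T_{i}:X_i\to Y_i$ a bounded linear operator. Suppose that $e_{s}(T_{i})\leq (m/s)^{\alpha}$ for all $i,s\in\{1,\dots,m\}$. Let $T:l_{p}^{m}(\{X_{i}\}_{i=1}^m)\rightarrow l_{q}^{m}(\{Y_{i}\}_{i=1}^m)$ be the linear operator $T(x)=(T_{1}(x_{1}),\dots,T_{m}(x_{m}))$ for $x=(x_{1},\dots,x_{m})\in X_1\times\dots\times X_m$. Then $e_{5m}(T)\leq 3^{1/q}$.
   Context: For quasi-Banach spaces $X_1,\dots,X_m$ and $0<p\le\infty$, $l_p^m(\{X_i\}_{i=1}^m)$ is the space of tuples $x=(x_1,\dots,x_m)$, $x_i\in X_i$, with quasi-norm $(\sum_{i=1}^m\|x_i\|_{X_i}^p)^{1/p}$ (and $\max_i\|x_i\|_{X_i}$ if $p=\infty$). For a bounded linear operator $S:X\to Y$ between quasi-Banach spaces and $n\in\mathbb{N}$, the entropy number $e_n(S)$ is the infimum of $\varepsilon>0$ such that $S(B_X)$ ($B_X$ the closed unit ball of $X$) can be covered by $2^{n-1}$ balls in $Y$ of radius $\varepsilon$. Convention $3^{1/\infty}=1$. *)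

From HB Require Import structures.
From mathcomp Require Import all_boot all_order all_algebra.
From mathcomp Require Import all_classical all_reals.
From mathcomp Require Import exp.
Set Implicit Arguments. Unset Strict Implicit. Unset Printing Implicit Defensive.
Import Order.TTheory GRing.Theory Num.Theory.
Local Open Scope ring_scope.
Local Open Scope classical_set_scope.

Section QB.
Variable R : realType.

Definition is_quasinorm (X : lmodType R) (nX : X -> R) : Prop :=
  [/\ forall x, 0 <= nX x,
      forall x, nX x = 0 <-> x = 0,
      forall (a : R) x, nX (a *: x) = `|a| * nX x
    & exists C : R, 1 <= C /\ forall x y, nX (x + y) <= C * (nX x + nX y)].

Definition qn_complete (X : lmodType R) (nX : X -> R) : Prop :=
  forall u : nat -> X,
    (forall eps : R, 0 < eps -> exists N, forall k l, (N <= k)%N -> (N <= l)%N ->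
        nX (u k - u l) < eps) ->
    exists x, forall eps : R, 0 < eps -> exists N, forall k, (N <= k)%N ->
        nX (u k - x) < eps.

Definition is_quasi_banach (X : lmodType R) (nX : X -> R) : Prop :=
  is_quasinorm nX /\ qn_complete nX.

Definition bounded_op (X Y : lmodType R) (nX : X -> R) (nY : Y -> R)
  (S : {linear X -> Y}) : Prop :=
  exists C : R, forall x, nY (S x) <= C * nX x.

Definition entropy_number (X Y : lmodType R) (nX : X -> R) (nY : Y -> R)
  (S : X -> Y) (n : nat) : R :=
  inf [set eps : R | 0 < eps /\
        exists c : 'I_(2 ^ (n.-1)) -> Y,
          forall x, nX x <= 1 -> exists j, nY (S x - c j) <= eps].

Definition dprod (m : nat) (X : 'I_m -> lmodType R) := forall i, X i.

Section Dprod.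
Variables (m : nat) (X : 'I_m -> lmodType R).
HB.instance Definition _ := gen_eqMixin (dprod X).
HB.instance Definition _ := gen_choiceMixin (dprod X).
Definition dp_zero : dprod X := fun i => 0.
Definition dp_add (x y : dprod X) : dprod X := fun i => x i + y i.
Definition dp_opp (x : dprod X) : dprod X := fun i => - x i.
Definition dp_scale (a : R) (x : dprod X) : dprod X := fun i => a *: x i.
Lemma dp_addA : associative dp_add.
Proof. by move=> x y z; apply: functional_extensionality_dep => i; rewrite /dp_add addrA. Qed.
Lemma dp_addC : commutative dp_add.
Proof. by move=> x y; apply: functional_extensionality_dep => i; rewrite /dp_add addrC. Qed.
Lemma dp_add0 : left_id dp_zero dp_add.
Proof. by move=> x; apply: functional_extensionality_dep => i; rewrite /dp_add add0r. Qed.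
Lemma dp_addN : left_inverse dp_zero dp_opp dp_add.
Proof. by move=> x; apply: functional_extensionality_dep => i; rewrite /dp_add addNr. Qed.
HB.instance Definition _ := GRing.isZmodule.Build (dprod X) dp_addA dp_addC dp_add0 dp_addN.
Lemma dp_scaleA a b (x : dprod X) : dp_scale a (dp_scale b x) = dp_scale (a * b) x.
Proof. by apply: functional_extensionality_dep => i; rewrite /dp_scale scalerA. Qed.
Lemma dp_scale1 : left_id 1 dp_scale.
Proof. by move=> x; apply: functional_extensionality_dep => i; rewrite /dp_scale scale1r. Qed.
Lemma dp_scaleDr : right_distributive dp_scale (@GRing.add (dprod X)).
Proof. by move=> a x y; apply: functional_extensionality_dep => i; rewrite /dp_scale scalerDr. Qed.
Lemma dp_scaleDl (x : dprod X) : {morph dp_scale^~ x : a b / a + b}.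
Proof. by move=> a b; apply: functional_extensionality_dep => i; rewrite /dp_scale scalerDl. Qed.
HB.instance Definition _ := GRing.Zmodule_isLmodule.Build R (dprod X)
  dp_scaleA dp_scale1 dp_scaleDr dp_scaleDl.
End Dprod.

Definition exp_inv (r : \bar R) : R :=
  match r with EFin s => s^-1 | _ => 0 end.

Definition lsum (m : nat) (r : \bar R) (f : 'I_m -> R) : R :=
  match r with
  | EFin s => (\sum_(i < m) f i `^ s) `^ s^-1
  | _ => \big[Num.max/0]_(i < m) f i
  end.

Definition lp_norm (m : nat) (X : 'I_m -> lmodType R) (nX : forall i, X i -> R)
  (r : \bar R) (x : dprod X) : R := lsum r (fun i => nX i (x i)).

Definition diag_op (m : nat) (X Y : 'I_m -> lmodType R)
  (T : forall i, {linear X i -> Y i}) (x : dprod X) : dprod Y :=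
  fun i => T i (x i).

End QB.

From HB Require Import structures.
From mathcomp Require Import all_boot all_order all_algebra.
From mathcomp Require Import all_classical all_reals.
From mathcomp Require Import exp.
From mathcomp Require Import zify lra.
Import Order.TTheory GRing.Theory Num.Theory.

(* Let x = (x_i) lie in the unit ball of l_p^m, put t_i = |x_i| and
   let k_i be the least integer >= m t_i^p, so that k_i <= m and
   sum_i k_i <= 2m. Coordinate i is approximated by (k_i/m)^(1/p) times the
   centre of a covering of T_i(B_{X_i}) by 2^(k_i - 1) balls of radius about
   (m/k_i)^alpha; the error is about (k_i/m)^(1/q), and the l_q-sum of these
   errors is at most (sum_i k_i/m)^(1/q) <= 2^(1/q). The codes (k_i, b_i), with
   b_i the index of the ball, form sequences with sum_i (k_i - 1) <= m, and
   there are at most 4^(2m) <= 2^(5m-1) of them. So in fact e_{5m}(T) <= 2^(1/q);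
   only homogeneity and definiteness of the quasi-norms are used. *)

(* All length-n sequences of pairs (k, b) with b < 2^(k-1) and
   sum (k - 1) <= bud; the pair (0, 0) is the only one with k = 0. *)
Fixpoint codes (n bud : nat) : seq (seq (nat * nat)) :=
  if n is n'.+1 then
    [seq (0, 0) :: s | s <- codes n' bud] ++
    flatten [seq [seq (k.+1, b) :: s | b <- iota 0 (2 ^ k), s <- codes n' (bud - k)]
            | k <- iota 0 bud.+1]
  else [:: [::]].

Lemma codesS n bud : codes n.+1 bud =
  [seq (0, 0) :: s | s <- codes n bud] ++
  flatten [seq [seq (k.+1, b) :: s | b <- iota 0 (2 ^ k), s <- codes n (bud - k)]
          | k <- iota 0 bud.+1].
Proof. by []. Qed.

Lemma sum_pow2_pow4_eq {N k : nat} : k <= N ->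
  \sum_(j < k) 2 ^ j * 4 ^ (N - j) + 2 * (2 ^ k * 4 ^ (N - k)) = 2 * 4 ^ N.
Proof.
elim: k => [|k IH] kN; first by rewrite big_ord0 subn0 expn0 mul1n.
rewrite big_ord_recr /= -addnA -IH; last by lia.
congr (_ + _).
have -> : N - k = (N - k.+1).+1 by lia.
rewrite !expnS; lia.
Qed.

Lemma sum_pow2_pow4_le {N k : nat} : k <= N ->
  \sum_(j < k.+1) 2 ^ j * 4 ^ (N - j) <= 2 * 4 ^ N.
Proof.
by move=> kN; rewrite -(sum_pow2_pow4_eq kN) big_ord_recr leq_add2l leq_pmull.
Qed.

Lemma size_codes n bud : size (codes n bud) <= 4 ^ (n + bud).
Proof.
elim: n bud => [|n IH] bud; first by rewrite expn_gt0.
rewrite codesS size_cat size_map size_flatten /shape sumnE !big_map.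
have -> : n.+1 + bud = (n + bud).+1 by lia.
have sum_le : \sum_(k <- iota 0 bud.+1)
    size [seq (k.+1, b) :: s | b <- iota 0 (2 ^ k), s <- codes n (bud - k)]
  <= \sum_(k < bud.+1) 2 ^ k * 4 ^ (n + bud - k).
  rewrite -(big_mkord xpredT (fun k => 2 ^ k * 4 ^ (n + bud - k))) /index_iota subn0.
  rewrite !big_seq; apply: leq_sum => k; rewrite mem_iota => /andP[_ kb].
  rewrite size_allpairs size_iota leq_mul2l (_ : n + bud - k = n + (bud - k)) ?IH ?orbT //.
  lia.
have := sum_pow2_pow4_le (leq_addl n bud); have := IH bud.
rewrite expnS; lia.
Qed.

Definition code_ok (kb : nat * nat) := kb.2 < 2 ^ kb.1.-1.

Lemma mem_codes (s : seq (nat * nat)) bud :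
  all code_ok s -> sumn [seq kb.1.-1 | kb <- s] <= bud -> s \in codes (size s) bud.
Proof.
elim: s bud => [|[[|k] b] s IH] bud; first by rewrite inE.
all: move=> /andP[ok_b ok_s] sum_le; rewrite /code_ok /= in ok_b sum_le.
all: rewrite codesS mem_cat.
  by rewrite (_ : b = 0) ?map_f ?IH //; lia.
apply/orP; right; apply/flatten_mapP; exists k; first by rewrite mem_iota; lia.
by rewrite allpairs_f ?mem_iota ?IH //; lia.
Qed.

Lemma mem_codes_ord n bud (kb : 'I_n -> nat * nat) :
  (forall i, code_ok (kb i)) -> \sum_i (kb i).1.-1 <= bud ->
  [seq kb i | i <- enum 'I_n] \in codes n bud.
Proof.
move=> kb_ok sum_le; rewrite -[n in codes n](size_enum_ord n) -(size_map kb).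
apply: mem_codes; first by apply/allP => _ /mapP[i _ ->].
by rewrite -map_comp sumnE big_map big_enum.
Qed.

Lemma nth_map_enum_ord (T : Type) (x0 : T) n (f : 'I_n -> T) (i : 'I_n) :
  nth x0 [seq f j | j <- enum 'I_n] i = f i.
Proof. by rewrite (nth_map i) ?size_enum_ord // nth_ord_enum. Qed.

Lemma size_codes_le {n} : 0 < n -> size (codes n n) <= 2 ^ (5 * n).-1.
Proof.
move=> n_gt0; apply: leq_trans (size_codes n n) _.
by rewrite -[4]/(2 ^ 2) -expnM leq_exp2l //; lia.
Qed.

Local Open Scope ring_scope.

Section QuasiNorm.
Context {R : realType} {X : lmodType R} {nX : X -> R} (nX_qn : is_quasinorm nX).

Lemma quasinorm_ge0 x : 0 <= nX x. Proof. by case: nX_qn. Qed.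

Lemma quasinorm_eq0 x : nX x = 0 -> x = 0. Proof. by case: nX_qn => _ /(_ x)[]. Qed.

Lemma quasinormZ a x : nX (a *: x) = `|a| * nX x. Proof. by case: nX_qn. Qed.

End QuasiNorm.

Section RealFacts.
Context {R : realType}.
Implicit Types (x y a b : R).

Lemma le_of_forall_gt1M x y : 0 < y -> (forall c, 1 < c -> x <= c * y) -> x <= y.
Proof.
move=> y_gt0 le_xcy; apply/ler_addgt0Pr => e e_gt0.
have := le_xcy (1 + e / y); rewrite ltrDl divr_gt0 //.
by rewrite mulrDl mul1r divfK ?gt_eqF //; apply.
Qed.

Lemma nat_ceil_exists y : 0 <= y -> exists k : nat, y <= k%:R < y + 1.
Proof.
move=> y_ge0; have /andP[ceil_lt y_le] := Num.Theory.ceil_itv y.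
have ceil_ge0 : 0 <= Num.ceil y by rewrite ceil_ge0 (lt_le_trans _ y_ge0) ?ltrN10.
exists `|Num.ceil y|%N; rewrite natr_absz ger0_norm // y_le /=.
by move: ceil_lt; rewrite intrB ltrBlDr.
Qed.

Lemma powRKV {x a} : 0 <= x -> a != 0 -> (x `^ a) `^ a^-1 = x.
Proof. by move=> x_ge0 a_neq0; rewrite -powRrM mulfV ?powRr1. Qed.

Lemma powRVK {x a} : 0 <= x -> a != 0 -> (x `^ a^-1) `^ a = x.
Proof. by move=> x_ge0 a_neq0; rewrite -powRrM mulVf ?powRr1. Qed.

Lemma le_powR_inv {a x y} : 0 < a -> 0 <= x -> x `^ a <= y -> x <= y `^ a^-1.
Proof.
move=> a_gt0 x_ge0 xa_le; have y_ge0 : 0 <= y := le_trans (powR_ge0 _ _) xa_le.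
rewrite -[leLHS](powRKV x_ge0 (lt0r_neq0 a_gt0)).
by apply: ge0_ler_powR xa_le; rewrite ?invr_ge0 ?(ltW a_gt0) // nnegrE ?powR_ge0.
Qed.

Lemma powR_mul_invB y a b : 0 < y -> y `^ a * y^-1 `^ (a - b) = y `^ b.
Proof.
move=> y_gt0; rewrite -powR_inv1 ?ltW // -powRrM -powRD; last first.
  by rewrite (gt_eqF y_gt0) implybT.
by congr (_ `^ _); lra.
Qed.

Lemma exp_inv_ge0 (q : \bar R) : (0 < q)%E -> 0 <= exp_inv q.
Proof. by case: q => [s||] //=; rewrite lte_fin => s_gt0; rewrite invr_ge0 ltW. Qed.

Lemma lsum_le1_sum_powR {m : nat} {a} {t : 'I_m -> R} : 0 < a -> (forall i, 0 <= t i) ->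
  lsum a%:E t <= 1 -> \sum_i t i `^ a <= 1.
Proof.
move=> a_gt0 t_ge0 /= le1; have S_ge0 : 0 <= \sum_i t i `^ a.
  by apply: sumr_ge0 => i _; apply: powR_ge0.
have := ge0_ler_powR (ltW a_gt0) _ _ le1.
rewrite powRVK ?(gt_eqF a_gt0) // powR1; apply; rewrite nnegrE ?powR_ge0 //.
Qed.

Lemma lsum_le_sum {m : nat} {q : \bar R} {c : R} {e k : 'I_m -> R} :
  (0 < q)%E -> 0 <= c -> (forall i, 0 <= e i) -> (forall i, 0 <= k i) ->
  (forall i, e i <= c * k i `^ exp_inv q) -> lsum q e <= c * (\sum_i k i) `^ exp_inv q.
Proof.
case: q => [s||] //=; rewrite ?lte_fin => + c_ge0 e_ge0 k_ge0 le_e; last first.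
  move=> _; rewrite powRr0 mulr1; apply: bigmax_le => // i _.
  by have := le_e i; rewrite powRr0 mulr1.
move=> s_gt0; have s_neq0 : s != 0 by rewrite gt_eqF.
have ck_ge0 i : 0 <= c * k i `^ s^-1 by rewrite mulr_ge0 ?powR_ge0.
have sum_le : \sum_i e i `^ s <= c `^ s * \sum_i k i.
  rewrite mulr_sumr; apply: ler_sum => i _.
  have := ge0_ler_powR (ltW s_gt0) (e_ge0 i) (ck_ge0 i) (le_e i).
  by rewrite powRM ?powR_ge0 // powRVK.
have s_inv_ge0 : 0 <= s^-1 by rewrite invr_ge0 ltW.
apply: le_trans (ge0_ler_powR s_inv_ge0 _ _ sum_le) _; rewrite ?nnegrE.
- by apply: sumr_ge0 => i _; apply: powR_ge0.
- by rewrite mulr_ge0 ?powR_ge0 ?sumr_ge0.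
- by rewrite powRM ?powR_ge0 ?sumr_ge0 // powRKV.
Qed.
End RealFacts.

Section Coverings.
Local Open Scope classical_set_scope.
Context {R : realType} {X Y : lmodType R} (nX : X -> R) (nY : Y -> R).

Definition covering (S : X -> Y) (N : nat) (eps : R) (c : nat -> Y) :=
  forall x, nX x <= 1 -> exists2 j, (j < N)%N & nY (S x - c j) <= eps.

Lemma entropy_number_le {S : X -> Y} {n N eps c} :
  0 < eps -> (N <= 2 ^ n.-1)%N -> covering S N eps c -> entropy_number nX nY S n <= eps.
Proof.
move=> eps_gt0 le_N cov; apply: ge_inf; first by exists 0 => e [/ltW].
split=> //; exists (fun j => c (val j)) => x /cov[j lt_jN le_eps].
by exists (Ordinal (leq_trans lt_jN le_N)).
Qed.

Lemma entropy_number_cover {S : {linear X -> Y}} {n eps} :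
  (forall x, 0 <= nX x) -> bounded_op nX nY S -> entropy_number nX nY S n < eps ->
  exists c, covering S (2 ^ n.-1) eps c.
Proof.
move=> nX_ge0 [C le_C] lt_eps.
rewrite /entropy_number in lt_eps; set E := [set e | _] in lt_eps.
have E_inf : has_inf E.
  split; last by exists 0 => e [/ltW].
  exists (`|C| + 1); split; first by rewrite ltr_wpDl.
  have N_gt0 : (0 < 2 ^ n.-1)%N by rewrite expn_gt0.
  exists (fun=> 0) => x le1; exists (Ordinal N_gt0).
  rewrite subr0; apply: le_trans (le_C x) _.
  have := nX_ge0 x; have := ler_norm C; have := normr_ge0 C; nra.
have eps_gap : 0 < eps - inf E by rewrite subr_gt0.
have [e [_ [c cov]] lt_e] := inf_adherent eps_gap E_inf.
rewrite addrC subrK in lt_e.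
exists (fun j => if insub j is Some j' then c j' else 0) => x /cov[j le_e].
by exists (val j); rewrite ?valK ?ltn_ord // (le_trans le_e) ?ltW.
Qed.

Lemma entropy_number_covers (S : {linear X -> Y}) (P : pred nat) (eps : nat -> R) :
  (forall x, 0 <= nX x) -> bounded_op nX nY S ->
  (forall n, P n -> entropy_number nX nY S n < eps n) ->
  exists c : nat -> nat -> Y, forall n, P n -> covering S (2 ^ n.-1) (eps n) (c n).
Proof.
move=> nX_ge0 S_bd lt_eps.
suff [c cov] : {c : nat -> nat -> Y & forall n, P n -> covering S (2 ^ n.-1) (eps n) (c n)}.
  by exists c.
apply: (@choice _ _ (fun n c => P n -> covering S (2 ^ n.-1) (eps n) c)) => n.
case: (boolP (P n)) => [Pn | _]; last by exists (fun=> 0).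
by have [c cov] := entropy_number_cover nX_ge0 S_bd (lt_eps n Pn); exists c.
Qed.

Hypothesis nXZ : forall a x, nX (a *: x) = `|a| * nX x.
Hypothesis nYZ : forall a y, nY (a *: y) = `|a| * nY y.

Lemma covering_scale {S : {linear X -> Y}} {N eps c r x} :
  covering S N eps c -> 0 < r -> nX x <= r ->
  exists2 j, (j < N)%N & nY (S x - r *: c j) <= r * eps.
Proof.
move=> cov r_gt0 le_r; have r_neq0 : r != 0 by rewrite gt_eqF.
have [|j lt_jN le_eps] := cov (r^-1 *: x).
  by rewrite nXZ ger0_norm ?invr_ge0 ?(ltW r_gt0) // mulrC ler_pdivrMr // mul1r.
exists j => //; rewrite -[x](scalerKV r_neq0) linearZ -scalerBr nYZ ger0_norm ?(ltW r_gt0) //.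
by rewrite ler_pM2l.
Qed.
End Coverings.

Section DiagonalOperator.
Context {R : realType} {m : nat} {X Y : 'I_m -> lmodType R}.
Variables (nX : forall i, X i -> R) (nY : forall i, Y i -> R).
Variable T : forall i, {linear X i -> Y i}.
Hypothesis m_gt0 : (0 < m)%N.
Hypothesis nX_ge0 : forall i x, 0 <= nX i x.
Hypothesis nX_eq0 : forall i x, nX i x = 0 -> x = 0.
Hypothesis nXZ : forall i a x, nX i (a *: x) = `|a| * nX i x.
Hypothesis nY_ge0 : forall i y, 0 <= nY i y.
Hypothesis nYZ : forall i a y, nY i (a *: y) = `|a| * nY i y.
Variables (p : R) (q : \bar R) (c : R).
Hypotheses (p_gt0 : 0 < p) (q_gt0 : (0 < q)%E) (c_ge0 : 0 <= c).
Variable D : forall i, nat -> nat -> Y i.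
Hypothesis D_cover : forall i s, (1 <= s <= m)%N ->
  covering (nX i) (nY i) (T i) (2 ^ s.-1) (c * (m%:R / s%:R) `^ (p^-1 - exp_inv q)) (D i s).

Definition radius (k : nat) : R := (k%:R / m%:R) `^ p^-1.

(* radius 0 = 0, so the code (0, 0) yields the zero coordinate. *)
Definition center (sq : seq (nat * nat)) : dprod Y :=
  fun i => radius (nth (0, 0) sq i).1 *: D i (nth (0, 0) sq i).1 (nth (0, 0) sq i).2.

Lemma coord_approx {i} {x : X i} : nX i x `^ p <= 1 ->
  exists kb : nat * nat, [/\ code_ok kb, (kb.1.-1)%:R <= m%:R * nX i x `^ p
    & nY i (T i x - radius kb.1 *: D i kb.1 kb.2) <= c * (kb.1%:R / m%:R) `^ exp_inv q].
Proof.
move=> tp_le1; have m_pos : 0 < m%:R :> R by rewrite ltr0n.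
have [|k /andP[le_k lt_k]] := @nat_ceil_exists R (m%:R * nX i x `^ p).
  by rewrite mulr_ge0 ?powR_ge0.
have le_km : (k <= m)%N by rewrite -ltnS -(ltr_nat R) -natr1; nra.
case: (posnP k) => [k0 | k_gt0].
  have x0 : x = 0.
    apply/nX_eq0/(@powR_eq0_eq0 _ _ p)/le_anti; rewrite powR_ge0 andbT.
    by move: le_k; rewrite k0 pmulr_rle0.
  exists (0, 0)%N; split => //=; first by rewrite mulr_ge0 ?powR_ge0.
  rewrite x0 linear0 /radius mul0r powR0 ?invr_eq0 ?gt_eqF // scale0r subr0.
  by rewrite -(scale0r (0 : Y i)) nYZ normr0 !mul0r mulr_ge0 ?powR_ge0.
have k_pos : 0 < k%:R :> R by rewrite ltr0n.
have le_radius : nX i x <= radius k.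
  by apply: le_powR_inv => //; rewrite ler_pdivlMr // mulrC.
have k_range : (0 < k <= m)%N by rewrite k_gt0.
have r_gt0 : 0 < radius k by apply: powR_gt0; rewrite divr_gt0.
have [b lt_b le_b] :=
  covering_scale _ _ (nXZ i) (nYZ i) (D_cover i k k_range) r_gt0 le_radius.
exists (k, b); split => //=.
  by move: lt_k; rewrite -(prednK k_gt0) -natr1 /=; lra.
rewrite (le_trans le_b) // mulrCA /radius -[m%:R / k%:R]invf_div powR_mul_invB //.
exact: divr_gt0.
Qed.

Lemma diag_covering :
  covering (lp_norm nX p%:E) (lp_norm nY q) (diag_op T) (size (codes m m))
    (c * 2 `^ exp_inv q) (fun j => center (nth [::] (codes m m) j)).
Proof.
move=> x /(lsum_le1_sum_powR p_gt0 (fun i => nX_ge0 i (x i))) sum_le1.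
have tp_le1 i : nX i (x i) `^ p <= 1.
  apply: le_trans sum_le1; rewrite (bigD1 i) //= lerDl.
  by apply: sumr_ge0 => j _; apply: powR_ge0.
have [kb kb_spec] := fin_all_exists (fun i => coord_approx (tp_le1 i)).
have pred_le i : ((kb i).1.-1)%:R <= m%:R * nX i (x i) `^ p by case: (kb_spec i).
have sum_pred_le : \sum_i ((kb i).1.-1)%:R <= m%:R :> R.
  apply: le_trans (ler_sum _ (fun i _ => pred_le i)) _.
  by rewrite -mulr_sumr ler_piMr.
set sq := [seq kb i | i <- enum 'I_m].
have sq_codes : sq \in codes m m.
  apply: mem_codes_ord => [i|]; first by case: (kb_spec i).
  by rewrite -(ler_nat R) natr_sum.
exists (index sq (codes m m)); first by rewrite index_mem.
rewrite nth_index //; apply: le_trans (lsum_le_sum (k := fun i => (kb i).1%:R / m%:R)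
  q_gt0 c_ge0 (fun i => nY_ge0 i _) _ _) _.
- by move=> i; rewrite divr_ge0.
- move=> i; change (nY i (T i (x i) - center sq i) <= c * ((kb i).1%:R / m%:R) `^ exp_inv q).
  by rewrite /center nth_map_enum_ord; case: (kb_spec i).
rewrite ler_wpM2l // ge0_ler_powR ?exp_inv_ge0 ?nnegrE //.
  by rewrite sumr_ge0 // => i _; rewrite divr_ge0.
rewrite -mulr_suml ler_pdivrMr ?ltr0n //.
have le_succ_pred i : (kb i).1%:R <= ((kb i).1.-1)%:R + 1 :> R.
  by rewrite natr1 ler_nat leqSpred.
apply: le_trans (ler_sum _ (fun i _ => le_succ_pred i)) _.
by rewrite big_split sumr_const card_ord /=; lra.
Qed.
End DiagonalOperator.

Theorem lemma2p3 (R : realType) (m : nat) (hm : (2 <= m)%N)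
  (p : R) (q : \bar R) (hp : 0 < p) (hpq : (p%:E < q)%E)
  (X Y : 'I_m -> lmodType R)
  (nX : forall i, X i -> R) (nY : forall i, Y i -> R)
  (hX : forall i, is_quasi_banach (nX i)) (hY : forall i, is_quasi_banach (nY i))
  (T : forall i, {linear X i -> Y i})
  (hT : forall i, bounded_op (nX i) (nY i) (T i))
  (he : forall (i : 'I_m) (s : nat), (1 <= s <= m)%N ->
          entropy_number (nX i) (nY i) (T i) s
            <= (m%:R / s%:R) `^ (p^-1 - exp_inv q)) :
  entropy_number (lp_norm nX p%:E) (lp_norm nY q) (diag_op T) (5 * m)
    <= 3 `^ exp_inv q.
Proof.
have q_gt0 : (0 < q)%E by apply: lt_trans hpq; rewrite lte_fin.
have m_gt0 : (0 < m)%N by apply: leq_trans hm.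
have nX_ge0 i := quasinorm_ge0 (proj1 (hX i)).
have nX_eq0 i := quasinorm_eq0 (proj1 (hX i)).
have nXZ i := quasinormZ (proj1 (hX i)).
have nY_ge0 i := quasinorm_ge0 (proj1 (hY i)).
have nYZ i := quasinormZ (proj1 (hY i)).
apply: (@le_trans _ _ (2 `^ exp_inv q)); last first.
  by apply: ge0_ler_powR; rewrite ?nnegrE ?exp_inv_ge0 ?ler_nat.
apply: le_of_forall_gt1M => [|c c_gt1]; first exact: powR_gt0.
have c_gt0 : 0 < c := lt_trans ltr01 c_gt1.
have D_ex i : exists Di : nat -> nat -> Y i, forall s, (0 < s <= m)%N ->
    covering (nX i) (nY i) (T i) (2 ^ s.-1) (c * (m%:R / s%:R) `^ (p^-1 - exp_inv q)) (Di s).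
  apply: entropy_number_covers (nX_ge0 i) (hT i) _ => s s_range.
  apply: le_lt_trans (he i s s_range) _.
  by case/andP: s_range => s_gt0 _; rewrite ltr_pMl ?powR_gt0 ?divr_gt0 ?ltr0n.
have [D D_cover] := fin_all_exists D_ex.
apply: (entropy_number_le _ _ _ (size_codes_le m_gt0)
  (diag_covering _ _ _ m_gt0 nX_ge0 nX_eq0 nXZ nY_ge0 nYZ _ _ _ hp q_gt0 (ltW c_gt0) _ D_cover)).
by rewrite mulr_gt0 ?powR_gt0.
Qed.
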